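(* Assume $\delta=d$ and $\gamma\ge1$. Then on $A_p\times\mathbb{C}$ the limit $$G_f^\alpha(z,w)=\lim_{n\to\infty}\frac{1}{d^n}\log^+\max\{|p^n(z)|^{\max\{\alpha,0\}},|Q_z^n(w)|\}$$ exists in $[0,+\infty]$ and $$G_f^\alpha(z,w)=\begin{cases}+\infty & (z,w)\in A_f,\\ \max\{\alpha,0\}\,G_p(z) & (z,w)\in B_f.\end{cases}$$
   Context: Let $p(z)=z^d+O(z^{d-1})$ be a monic polynomial of degree $\delta=d\ge 2$, and let $q(z,w)=b(z)w^d+(\text{terms of lower degree in } w)$ be a polynomial with $\deg_w q=d$, where $b$ is a monic polynomial of degree $\gamma$. Let $f(z,w)=(p(z),q(z,w))$. Write $Q_z^n=q_{p^{n-1}(z)}\circ\cdots\circ q_{p(z)}\circ q_z$ with $q_z=q(z,\cdot)$, so $f^n(z,w)=(p^n(z),Q_z^n(w))$. Let $A_p=\{z: p^n(z)\to\infty\}$ and $G_p(z)=\lim_n d^{-n}\log^+|p^n(z)|$. Define $\alpha=\max\{(n_j-\gamma)/(d-m_j)\}$ over monomials $z^{n_j}w^{m_j}$ appearing in $q$ with nonzero coefficient and $m_j<d$, and $\alpha=-\infty$ if $q=b(z)w^d$ (then $\max\{\alpha,0\}=0$). Let $W_R=\{(z,w):|z|>R,\ |w|>R|z|^\alpha\}$ (if $\alpha=-\infty$: $\{|z|>R,\ w\ne0\}$), fix $R>1$ large enough that $f(W_R)\subset W_R$ and $W_R\subset A_p\times\mathbb{C}$, and set $A_f=\bigcup_{n\ge0}f^{-n}(W_R)$,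 $B_f=(A_p\times\mathbb{C})\setminus A_f$. *)

From Stdlib Require Import Reals Lra List.
Import ListNotations.
Open Scope R_scope.

Definition Cx := (R * R)%type.
Definition C0 : Cx := (0, 0).
Definition C1 : Cx := (1, 0).
Definition Cadd (a b : Cx) : Cx := (fst a + fst b, snd a + snd b).
Definition Cmul (a b : Cx) : Cx :=
  (fst a * fst b - snd a * snd b, fst a * snd b + snd a * fst b).
Definition Cmod (a : Cx) : R := sqrt (fst a * fst a + snd a * snd a).

(* ---------- univariate polynomials: coefficient lists, constant term first ---------- *)
Definition cpoly := list Cx.
Fixpoint ceval (p : cpoly) (z : Cx) : Cx :=
  match p with
  | [] => C0
  | c :: p' => Cadd c (Cmul z (ceval p' z))
  end.
Definition monic_deg (p : cpoly) (n : nat) : Prop :=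
  length p = S n /\ nth n p C0 = C1.

(* ---------- bivariate polynomials q(z,w) = sum_j (q_j(z)) w^j ---------- *)
Definition bpoly := list cpoly.
Fixpoint beval (q : bpoly) (z w : Cx) : Cx :=
  match q with
  | [] => C0
  | c :: q' => Cadd (ceval c z) (Cmul w (beval q' z w))
  end.

Definition fmap (p : cpoly) (q : bpoly) (x : Cx * Cx) : Cx * Cx :=
  (ceval p (fst x), beval q (fst x) (snd x)).
Definition fiter (p : cpoly) (q : bpoly) (n : nat) (x : Cx * Cx) : Cx * Cx :=
  Nat.iter n (fmap p q) x.
Definition piter (p : cpoly) (n : nat) (z : Cx) : Cx := Nat.iter n (ceval p) z.
Definition Qiter (p : cpoly) (q : bpoly) (n : nat) (z w : Cx) : Cx :=
  snd (fiter p q n (z, w)).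

Definition Cnz (c : Cx) : bool :=
  if Req_EM_T (fst c) 0 then (if Req_EM_T (snd c) 0 then false else true) else true.

Definition omax (a b : option R) : option R :=
  match a, b with
  | None, _ => b
  | _, None => a
  | Some x, Some y => Some (Rmax x y)
  end.

Definition alpha_vals (q : bpoly) (d gamma : nat) : list R :=
  flat_map (fun m =>
    flat_map (fun n =>
      if Cnz (nth n (nth m q []) C0)
      then [(INR n - INR gamma) / (INR d - INR m)] else [])
      (seq 0 (length (nth m q []))))
    (seq 0 d).

(* alpha, with None standing for -infinity (case q = b(z) w^d) *)
Definition alpha (q : bpoly) (d gamma : nat) : option R :=
  fold_right (fun x acc => omax (Some x) acc) None (alpha_vals q d gamma).

Definition alpha_plus (q : bpoly) (d gamma : nat) : R :=
  match alpha q d gamma with None => 0 | Some a => Rmax a 0 end.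

Definition in_Ap (p : cpoly) (z : Cx) : Prop :=
  forall M : R, exists N : nat, forall n, (N <= n)%nat -> M < Cmod (piter p n z).

Definition in_WR (q : bpoly) (d gamma : nat) (R0 : R) (x : Cx * Cx) : Prop :=
  match alpha q d gamma with
  | Some a => R0 < Cmod (fst x) /\ R0 * Rpower (Cmod (fst x)) a < Cmod (snd x)
  | None => R0 < Cmod (fst x) /\ snd x <> C0
  end.

Definition in_Af (p : cpoly) (q : bpoly) (d gamma : nat) (R0 : R) (x : Cx * Cx) : Prop :=
  exists n : nat, in_WR q d gamma R0 (fiter p q n x).

(* ---------- log^+ and a power x^a with 0^a = 0 (a>0), x^0 = 1 ---------- *)
Definition logp (x : R) : R := if Rlt_dec 1 x then ln x else 0.
Definition rpow (x a : R) : R :=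
  if Rlt_dec 0 x then Rpower x a else if Req_EM_T a 0 then 1 else 0.

Definition Gp_seq (p : cpoly) (d : nat) (z : Cx) (n : nat) : R :=
  logp (Cmod (piter p n z)) / (INR d ^ n).

Definition Gf_seq (p : cpoly) (q : bpoly) (d gamma : nat) (z w : Cx) (n : nat) : R :=
  logp (Rmax (rpow (Cmod (piter p n z)) (alpha_plus q d gamma))
             (Cmod (Qiter p q n z w))) / (INR d ^ n).

(* Write x_n = |p^n(z)| and y_n = |Q_z^n(w)|.  Everything rests on two
   estimates for large moduli.
   - Since p is monic of degree d, ln x_{n+1} = d ln x_n + O(1); the
     classical telescoping argument then shows that d^{-n} ln x_n converges
     (to G_p(z)) and, for z in A_p, is eventually bounded below by a positive
     constant.
   - On W_R every monomial z^i w^m (m < d) of q is dominated by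
     |z|^gamma |w|^d / R -- this is what the exponent alpha is designed for --
     hence |q(z,w)| >= |z|^gamma |w|^d / 2 once R is large.
   If the orbit of (z,w) enters W_R it stays there, so
   ln y_{n+1} >= d ln y_n + gamma ln x_n - ln 2, and as ln x_n grows like d^n
   the quantity d^{-n} ln y_n increases by a fixed amount at each step:
   G_f = +oo.  If the orbit never enters W_R, then y_n <= R x_n^alpha, so the
   maximum in the definition of G_f lies between x_n^{alpha+} and
   R x_n^{alpha+}, and d^{-n} log^+ of it is squeezed towards alpha+ G_p(z). *)

From Pilot Require Import Defs.
From Stdlib Require Import Reals Lra Lia List Classical_Prop.
From Coquelicot Require Import Rcomplements Rbar Lim_seq.
From Coquelicot Require Complex.
Import ListNotations.
Open Scope R_scope.

Lemma Cmod_Coquelicot (a : Cx) : Cmod a = Complex.Cmod a.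
Proof. unfold Cmod, Complex.Cmod; simpl; f_equal; ring. Qed.

Lemma Cmod_triangle (a b : Cx) : Cmod (Cadd a b) <= Cmod a + Cmod b.
Proof. rewrite !Cmod_Coquelicot; apply Complex.Cmod_triangle. Qed.

Lemma Cmod_mult (a b : Cx) : Cmod (Cmul a b) = Cmod a * Cmod b.
Proof. rewrite !Cmod_Coquelicot; apply Complex.Cmod_mult. Qed.

Lemma Cmod_ge_0 (a : Cx) : 0 <= Cmod a.
Proof. rewrite Cmod_Coquelicot; apply Complex.Cmod_ge_0. Qed.

Lemma Cmod_C0 : Cmod C0 = 0.
Proof. rewrite Cmod_Coquelicot; apply Complex.Cmod_0. Qed.

Lemma Cmod_C1 : Cmod Defs.C1 = 1.
Proof. rewrite Cmod_Coquelicot; apply Complex.Cmod_1. Qed.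

Lemma Cmod_eq_0 (a : Cx) : Cmod a = 0 -> a = C0.
Proof. rewrite Cmod_Coquelicot; apply Complex.Cmod_eq_0. Qed.

Lemma Cmod_reverse_triangle (a b : Cx) : Cmod b - Cmod a <= Cmod (Cadd a b).
Proof.
  assert (Hb : b = Cadd (Cadd a b) (Cmul (-1, 0) a))
    by (destruct a, b; unfold Cadd, Cmul; simpl; f_equal; ring).
  assert (Hm1 : Cmod (-1, 0) = 1).
  { unfold Cmod; simpl. replace (-1 * -1 + 0 * 0) with 1 by ring. apply sqrt_1. }
  pose proof (Cmod_triangle (Cadd a b) (Cmul (-1, 0) a)) as H.
  rewrite <- Hb, Cmod_mult, Hm1 in H. lra.
Qed.

Fixpoint rhorner (l : list R) (t : R) : R :=
  match l with [] => 0 | a :: l' => a + t * rhorner l' t end.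

Definition sumR (l : list R) : R := fold_right Rplus 0 l.

Lemma sumR_ge0 (l : list R) : (forall a, In a l -> 0 <= a) -> 0 <= sumR l.
Proof.
  induction l as [|a l IH]; simpl; intro Hpos; [lra|].
  pose proof (Hpos a (or_introl eq_refl)). assert (0 <= sumR l) by auto. lra.
Qed.

Lemma In_le_sumR (l : list R) (a : R) :
  (forall b, In b l -> 0 <= b) -> In a l -> a <= sumR l.
Proof.
  induction l as [|b l IH]; simpl; intros Hpos Hin; [contradiction|].
  assert (Hl : forall c, In c l -> 0 <= c) by auto.
  pose proof (sumR_ge0 l Hl). pose proof (Hpos b (or_introl eq_refl)).
  destruct Hin as [<-|Hin]; [lra|]. specialize (IH Hl Hin). lra.
Qed.

Lemma sumR_firstn_le (l : list R) (k : nat) :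
  (forall b, In b l -> 0 <= b) -> sumR (firstn k l) <= sumR l.
Proof.
  intro Hpos. rewrite <- (firstn_skipn k l) in Hpos.
  rewrite <- (firstn_skipn k l) at 2. unfold sumR. rewrite fold_right_app.
  assert (Hskip : 0 <= sumR (skipn k l))
    by (apply sumR_ge0; intros b Hb; apply Hpos, in_or_app; auto).
  fold (sumR (skipn k l)). clear Hpos.
  induction (firstn k l) as [|a l' IH]; simpl; lra.
Qed.

Lemma in_map_Cmod (l : cpoly) (a : R) : In a (map Cmod l) -> 0 <= a.
Proof. intro H. apply in_map_iff in H. destruct H as [c [<- _]]. apply Cmod_ge_0. Qed.

Lemma nth_map_Cmod (l : cpoly) (i : nat) : nth i (map Cmod l) 0 = Cmod (nth i l C0).
Proof. rewrite <- Cmod_C0. apply map_nth. Qed.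

(* If each term t^i a_i of the Horner sum, weighted by Y, is at most a_i E,
   the whole sum is at most (sum_i a_i) E; the shift j carries the induction. *)
Lemma rhorner_termwise (l : list R) (j : nat) (t Y E : R) :
  (forall i, (i < length l)%nat -> t ^ (i + j) * nth i l 0 * Y <= nth i l 0 * E) ->
  t ^ j * rhorner l t * Y <= sumR l * E.
Proof.
  revert j. induction l as [|a l IH]; intros j H; simpl; [lra|].
  pose proof (H 0%nat ltac:(simpl; lia)) as H0. simpl in H0.
  assert (Hl : t ^ S j * rhorner l t * Y <= sumR l * E).
  { apply IH. intros i Hi. replace (i + S j)%nat with (S i + j)%nat by lia.
    apply (H (S i)). simpl; lia. }
  simpl pow in Hl. nra.
Qed.

Lemma rhorner_uniform (l : list R) (j : nat) (t E : R) :
  (forall i, (i < length l)%nat -> t ^ (i + j) * nth i l 0 <= E) ->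
  t ^ j * rhorner l t <= INR (length l) * E.
Proof.
  revert j. induction l as [|a l IH]; intros j H; cbn [rhorner length]; [simpl; lra|].
  pose proof (H 0%nat ltac:(simpl; lia)) as H0. simpl in H0.
  assert (Hl : t ^ S j * rhorner l t <= INR (length l) * E).
  { apply IH. intros i Hi. replace (i + S j)%nat with (S i + j)%nat by lia.
    apply (H (S i)). simpl; lia. }
  rewrite S_INR. simpl pow in Hl. nra.
Qed.

Lemma ceval_upper (l : cpoly) (w : Cx) : Cmod (ceval l w) <= rhorner (map Cmod l) (Cmod w).
Proof.
  induction l as [|c l IH]; simpl; [rewrite Cmod_C0; lra|].
  eapply Rle_trans; [apply Cmod_triangle|]. rewrite Cmod_mult.
  pose proof (Cmod_ge_0 w). apply Rplus_le_compat_l, Rmult_le_compat_l; auto.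
Qed.

Lemma ceval_lower (l : cpoly) (k : nat) (w : Cx) : length l = S k ->
  Cmod (nth k l C0) * Cmod w ^ k - rhorner (map Cmod (firstn k l)) (Cmod w)
  <= Cmod (ceval l w).
Proof.
  revert l. induction k as [|k IH]; intros l Hl.
  - destruct l as [|c [|c' l']]; simpl in Hl; try discriminate. simpl.
    replace (Cadd c (Cmul w C0)) with c
      by (destruct c, w; unfold Cadd, Cmul, C0; simpl; f_equal; ring). lra.
  - destruct l as [|c l']; simpl in Hl; [discriminate|]. injection Hl as Hl.
    specialize (IH l' Hl). simpl.
    pose proof (Cmod_reverse_triangle c (Cmul w (ceval l' w))) as H.
    rewrite Cmod_mult in H. pose proof (Cmod_ge_0 w).
    assert (Cmod w * (Cmod (nth k l' C0) * Cmod w ^ k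
                      - rhorner (map Cmod (firstn k l')) (Cmod w))
            <= Cmod w * Cmod (ceval l' w)) by (apply Rmult_le_compat_l; lra).
    nra.
Qed.

Lemma monic_bounds (c : cpoly) (k : nat) : monic_deg c k -> (1 <= k)%nat ->
  exists K Sm, 1 <= K /\ 1 <= Sm /\ forall u, K <= Cmod u ->
    (3/4) * Cmod u ^ k <= Cmod (ceval c u) <= Sm * Cmod u ^ k.
Proof.
  intros [Hlen Hlead] Hk. set (Sm := sumR (map Cmod c)).
  assert (HS : 1 <= Sm).
  { unfold Sm. rewrite <- Cmod_C1, <- Hlead. apply In_le_sumR; [apply in_map_Cmod|].
    apply in_map, nth_In. lia. }
  exists (4 * Sm + 1), Sm. split; [lra|]. split; [exact HS|]. intros u Hu.
  set (x := Cmod u) in *. assert (Hx : 1 <= x) by lra.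
  assert (Hterms_below : forall (l : list R) e, (forall a, In a l -> 0 <= a) ->
            (length l <= S e)%nat ->
            (forall i, (i < length l)%nat -> x ^ (i + 0) * nth i l 0 * 1 <= nth i l 0 * x ^ e)).
  { intros l e Hpos Hle i Hi. rewrite Nat.add_0_r, Rmult_1_r, Rmult_comm.
    apply Rmult_le_compat_l; [apply Hpos, nth_In; lia|apply Rle_pow; [lra|lia]]. }
  split.
  - pose proof (ceval_lower c k u Hlen) as Hlow. rewrite Hlead, Cmod_C1 in Hlow.
    fold x in Hlow.
    assert (Hpos : forall a, In a (map Cmod (firstn k c)) -> 0 <= a) by apply in_map_Cmod.
    pose proof (rhorner_termwise (map Cmod (firstn k c)) 0 x 1 (x ^ (k - 1))
                  (Hterms_below _ (k - 1)%nat Hpos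
                     ltac:(rewrite length_map, length_firstn; lia))) as Hlo.
    pose proof (sumR_firstn_le (map Cmod c) k (in_map_Cmod c)) as HSk.
    rewrite firstn_map in HSk. fold Sm in HSk.
    assert (Hxk : x ^ k = x * x ^ (k - 1))
      by (replace k with (S (k - 1)) at 1 by lia; reflexivity).
    assert (Hx0 : 0 <= x ^ (k - 1)) by (apply pow_le; lra).
    assert (Sm * x ^ (k - 1) <= x ^ k / 4) by (rewrite Hxk; nra).
    assert (sumR (map Cmod (firstn k c)) * x ^ (k - 1) <= Sm * x ^ (k - 1))
      by (apply Rmult_le_compat_r; lra).
    lra.
  - eapply Rle_trans; [apply ceval_upper|]. fold x.
    pose proof (rhorner_termwise (map Cmod c) 0 x 1 (x ^ k)
                  (Hterms_below _ k (in_map_Cmod c) ltac:(rewrite length_map; lia))) as Hup.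
    simpl pow in Hup. fold Sm in Hup. lra.
Qed.

Lemma fold_omax_upper (l : list R) (v : R) : In v l -> exists a,
  fold_right (fun x acc => omax (Some x) acc) None l = Some a /\ v <= a.
Proof.
  induction l as [|x l IH]; intro Hin; [contradiction|].
  change (fold_right _ None (x :: l))
    with (omax (Some x) (fold_right (fun x acc => omax (Some x) acc) None l)).
  destruct Hin as [<-|Hin].
  - destruct (fold_right (fun x acc => omax (Some x) acc) None l) as [b|]; simpl.
    + exists (Rmax x b). split; [reflexivity|apply Rmax_l].
    + exists x. split; [reflexivity|lra].
  - destruct (IH Hin) as [b [-> Hvb]]. simpl.
    exists (Rmax x b). split; [reflexivity|]. eapply Rle_trans; [exact Hvb|apply Rmax_r].
Qed.

Lemma alpha_bounds_monomial (q : bpoly) (d gamma m i : nat) :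
  (m < d)%nat -> (i < length (nth m q []))%nat -> Cmod (nth i (nth m q []) C0) <> 0 ->
  exists a, alpha q d gamma = Some a /\ (INR i - INR gamma) / (INR d - INR m) <= a.
Proof.
  intros Hm Hi Hc. apply fold_omax_upper.
  assert (Hnz : Cnz (nth i (nth m q []) C0) = true).
  { unfold Cnz. destruct (nth i (nth m q []) C0) as [c1 c2] eqn:Hcoef; simpl.
    destruct (Req_EM_T c1 0), (Req_EM_T c2 0); auto. subst.
    exfalso. apply Hc, Cmod_C0. }
  unfold alpha_vals. apply in_flat_map. exists m. split; [apply in_seq; lia|].
  apply in_flat_map. exists i. split; [apply in_seq; lia|]. rewrite Hnz. now left.
Qed.

Lemma monomial_power_bound (x y R0 a : R) (i gamma m d : nat) :
  1 < x -> 1 <= R0 -> R0 * Rpower x a < y -> (m < d)%nat ->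
  (INR i - INR gamma) / (INR d - INR m) <= a ->
  R0 * x ^ i * y ^ m <= x ^ gamma * y ^ d.
Proof.
  intros Hx HR Hy Hmd Ha.
  set (k := (d - m)%nat). set (P := Rpower x a) in *.
  assert (Hk : INR d - INR m = INR k) by (unfold k; rewrite minus_INR; [ring|lia]).
  assert (HkR : 0 < INR k) by (apply lt_0_INR; unfold k; lia).
  assert (HP : 0 < P) by (unfold P, Rpower; apply exp_pos).
  assert (Hy0 : 0 < y) by (assert (0 < R0 * P) by (apply Rmult_lt_0_compat; lra); lra).
  rewrite Hk in Ha.
  assert (Hia : INR i <= a * INR k + INR gamma).
  { apply (Rmult_le_compat_r (INR k)) in Ha; [|lra].
    unfold Rdiv in Ha. rewrite Rmult_assoc, Rinv_l in Ha; lra. }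
  assert (Hxi : x ^ i <= P ^ k * x ^ gamma).
  { rewrite <- (Rpower_pow i x), <- (Rpower_pow gamma x), <- (Rpower_pow k P) by lra.
    unfold P. rewrite Rpower_mult, <- Rpower_plus. apply Rle_Rpower; lra. }
  assert (HRP : R0 * P ^ k <= y ^ k).
  { assert (HRk : R0 <= R0 ^ k) by (rewrite <- (pow_1 R0) at 1; apply Rle_pow; [lra|unfold k; lia]).
    assert (HPk : 0 <= P ^ k) by (apply pow_le; lra).
    apply Rle_trans with ((R0 * P) ^ k).
    - rewrite Rpow_mult_distr. apply Rmult_le_compat_r; lra.
    - apply pow_incr. split; [|lra]. apply Rmult_le_pos; lra. }
  assert (Hd : y ^ d = y ^ k * y ^ m) by (rewrite <- pow_add; f_equal; unfold k; lia).
  assert (Hym : 0 <= y ^ m) by (apply pow_le; lra).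
  assert (Hxg : 0 <= x ^ gamma) by (apply pow_le; lra).
  rewrite Hd. apply Rle_trans with (y ^ k * x ^ gamma * y ^ m); [|right; ring].
  apply Rmult_le_compat_r; [exact Hym|].
  apply Rle_trans with (R0 * P ^ k * x ^ gamma).
  - rewrite Rmult_assoc. apply Rmult_le_compat_l; lra.
  - apply Rmult_le_compat_r; lra.
Qed.

Lemma monomial_dominated (q : bpoly) (d gamma : nat) (R0 : R) (z w : Cx) (m i : nat) :
  1 <= R0 -> in_WR q d gamma R0 (z, w) -> (m < d)%nat -> (i < length (nth m q []))%nat ->
  Cmod (nth i (nth m q []) C0) <> 0 ->
  R0 * Cmod z ^ i * Cmod w ^ m <= Cmod z ^ gamma * Cmod w ^ d.
Proof.
  intros HR HW Hm Hi Hc.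
  destruct (alpha_bounds_monomial q d gamma m i Hm Hi Hc) as [a [Ha Hle]].
  unfold in_WR in HW. rewrite Ha in HW. simpl in HW. destruct HW as [Hz Hw].
  apply (monomial_power_bound _ _ _ a); auto; lra.
Qed.

Lemma in_WR_moduli (q : bpoly) (d gamma : nat) (R0 : R) (z w : Cx) :
  0 <= R0 -> in_WR q d gamma R0 (z, w) -> R0 < Cmod z /\ 0 < Cmod w.
Proof.
  intros HR HW. unfold in_WR in HW. simpl in HW.
  destruct (alpha q d gamma) as [a|]; destruct HW as [Hz Hw]; split; auto.
  - assert (0 <= R0 * Rpower (Cmod z) a)
      by (apply Rmult_le_pos; [lra|unfold Rpower; left; apply exp_pos]).
    lra.
  - destruct (Cmod_ge_0 w) as [H|H]; auto. exfalso. apply Hw, Cmod_eq_0. auto.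
Qed.

Lemma low_order_term_bound (q : bpoly) (d gamma : nat) (R0 : R) (z w : Cx) (m : nat) :
  1 <= R0 -> in_WR q d gamma R0 (z, w) -> (m < d)%nat ->
  Cmod w ^ m * Cmod (ceval (nth m q []) z)
  <= sumR (map Cmod (nth m q [])) * (Cmod z ^ gamma * Cmod w ^ d / R0).
Proof.
  intros HR HW Hm. set (qm := nth m q []).
  assert (Hym : 0 <= Cmod w ^ m) by (apply pow_le, Cmod_ge_0).
  eapply Rle_trans; [apply Rmult_le_compat_l; [exact Hym|apply ceval_upper]|].
  rewrite Rmult_comm, <- (Rmult_1_l (rhorner _ _)).
  apply (rhorner_termwise _ 0). intros i Hi.
  rewrite length_map in Hi. rewrite Nat.add_0_r, nth_map_Cmod.
  pose proof (Cmod_ge_0 (nth i qm C0)) as Hc0.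
  destruct (Req_EM_T (Cmod (nth i qm C0)) 0) as [Hc|Hc]; [rewrite Hc; lra|].
  pose proof (monomial_dominated q d gamma R0 z w m i HR HW Hm Hi Hc) as Hdom.
  assert (Cmod z ^ i * Cmod w ^ m <= Cmod z ^ gamma * Cmod w ^ d / R0).
  { apply (Rmult_le_reg_l R0); [lra|].
    replace (R0 * (Cmod z ^ gamma * Cmod w ^ d / R0)) with (Cmod z ^ gamma * Cmod w ^ d)
      by (field; lra). lra. }
  replace (Cmod z ^ i * Cmod (nth i qm C0) * Cmod w ^ m)
    with (Cmod (nth i qm C0) * (Cmod z ^ i * Cmod w ^ m)) by ring.
  apply Rmult_le_compat_l; lra.
Qed.

Lemma q_lower_bound_on_W (d gamma : nat) (q : bpoly) :
  (1 <= gamma)%nat -> length q = S d -> monic_deg (nth d q nil) gamma ->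
  exists Rmin, forall R0 z w, Rmin <= R0 -> in_WR q d gamma R0 (z, w) ->
    (1/2) * Cmod z ^ gamma * Cmod w ^ d <= Cmod (beval q z w).
Proof.
  intros Hg Hq Hb.
  destruct (monic_bounds _ _ Hb Hg) as [Kb [Sb [HKb [_ Hbz]]]].
  set (Sall := sumR (map (fun c => sumR (map Cmod c)) q)).
  assert (Hpos : forall a, In a (map (fun c => sumR (map Cmod c)) q) -> 0 <= a).
  { intros a Ha. apply in_map_iff in Ha. destruct Ha as [c [<- _]].
    apply sumR_ge0, in_map_Cmod. }
  assert (HSall : 0 <= Sall) by (apply sumR_ge0, Hpos).
  exists (Rmax Kb (4 * INR d * Sall + 1)). intros R0 z w HR0 HW.
  assert (HKR : Kb <= R0) by (eapply Rle_trans; [apply Rmax_l|exact HR0]).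
  assert (HSR : 4 * INR d * Sall + 1 <= R0) by (eapply Rle_trans; [apply Rmax_r|exact HR0]).
  destruct (in_WR_moduli q d gamma R0 z w ltac:(lra) HW) as [Hx Hy].
  set (x := Cmod z) in *. set (y := Cmod w) in *.
  set (T := x ^ gamma * y ^ d).
  assert (HT : 0 <= T) by (apply Rmult_le_pos; apply pow_le; lra).
  set (cs := map (fun c => ceval c z) q).
  assert (Hlow : rhorner (map Cmod (firstn d cs)) y <= INR d * (Sall * (T / R0))).
  { rewrite <- (Rmult_1_l (rhorner _ _)).
    replace (INR d) with (INR (length (map Cmod (firstn d cs))))
      by (unfold cs; rewrite length_map, length_firstn, length_map, Hq; f_equal; lia).
    apply (rhorner_uniform _ 0). intros m Hm.
    unfold cs in Hm. rewrite length_map, length_firstn, length_map, Hq in Hm.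
    rewrite Nat.add_0_r, nth_map_Cmod, nth_firstn.
    replace (m <? d)%nat with true by (symmetry; apply Nat.ltb_lt; lia).
    unfold cs. change C0 with ((fun c => ceval c z) []). rewrite map_nth.
    eapply Rle_trans; [apply (low_order_term_bound q d gamma R0 z w m); [lra|exact HW|lia]|].
    apply Rmult_le_compat_r; [apply Rdiv_le_0_compat; lra|].
    apply In_le_sumR; auto.
    apply (in_map (fun c => sumR (map Cmod c))), nth_In. lia. }
  assert (Hsmall : INR d * (Sall * (T / R0)) <= T / 4).
  { replace (INR d * (Sall * (T / R0))) with ((4 * INR d * Sall) * T / (4 * R0)) by (field; lra).
    apply (Rmult_le_reg_r (4 * R0)); [lra|]. unfold Rdiv.
    replace (4 * INR d * Sall * T * / (4 * R0) * (4 * R0)) with (4 * INR d * Sall * T)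
      by (field; lra).
    nra. }
  assert (Hlead : nth d cs C0 = ceval (nth d q []) z)
    by (unfold cs; change C0 with ((fun c => ceval c z) []); apply map_nth).
  pose proof (ceval_lower cs d w ltac:(unfold cs; rewrite length_map; exact Hq)) as Hq_lb.
  assert (Hbeval : beval q z w = ceval cs w).
  { unfold cs. clear. induction q as [|c q IH]; simpl; congruence. }
  rewrite Hlead in Hq_lb. fold y in Hq_lb. rewrite Hbeval.
  destruct (Hbz z ltac:(fold x; lra)) as [Hb34 _]. fold x in Hb34.
  assert (3/4 * x ^ gamma * y ^ d <= Cmod (ceval (nth d q []) z) * y ^ d)
    by (apply Rmult_le_compat_r; [apply pow_le; lra|exact Hb34]).
  unfold T in *. lra.
Qed.

Lemma ln_monotone (x y : R) : 0 < x -> x <= y -> ln x <= ln y.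
Proof.
  intros Hx Hxy. destruct (Rle_lt_or_eq_dec _ _ Hxy) as [H|<-]; [|lra].
  left. apply ln_increasing; auto.
Qed.

Lemma ln_2_lt_1 : ln 2 < 1.
Proof.
  rewrite <- (ln_exp 1). apply ln_increasing; [lra|].
  pose proof (exp_ineq1 1 ltac:(lra)). lra.
Qed.

Lemma p_log_estimate (p : cpoly) (d : nat) : monic_deg p d -> (1 <= d)%nat ->
  exists K M, 1 <= K /\ 0 <= M /\ forall u, K <= Cmod u ->
    Rabs (ln (Cmod (ceval p u)) - INR d * ln (Cmod u)) <= M.
Proof.
  intros Hp Hd. destruct (monic_bounds p d Hp Hd) as [K [Sp [HK [HS Hb]]]].
  assert (Hl2 : 0 < ln 2) by (rewrite <- ln_1; apply ln_increasing; lra).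
  assert (HlS : 0 <= ln Sp) by (rewrite <- ln_1; apply ln_monotone; lra).
  exists K, (ln Sp + ln 2). split; [exact HK|]. split; [lra|]. intros u Hu.
  destruct (Hb u Hu) as [Hlo Hup]. set (x := Cmod u) in *.
  assert (Hxd : 0 < x ^ d) by (apply pow_lt; lra).
  rewrite <- ln_pow by lra.
  assert (ln (Cmod (ceval p u)) <= ln Sp + ln (x ^ d))
    by (rewrite <- ln_mult by lra; apply ln_monotone; lra).
  assert (ln (x ^ d) - ln 2 <= ln (Cmod (ceval p u))).
  { replace (ln (x ^ d) - ln 2) with (ln (x ^ d * / 2))
      by (rewrite ln_mult, ln_Rinv; lra).
    apply ln_monotone; nra. }
  apply Rabs_le. lra.
Qed.

Lemma geometric_vanishing (c d : R) : 1 < d -> is_lim_seq (fun n => c / d ^ n) 0.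
Proof.
  intro Hd.
  apply is_lim_seq_ext with (fun n => c * (/ d) ^ n).
  { intro n. rewrite pow_inv. reflexivity. }
  replace (Finite 0) with (Rbar_mult c 0) by (simpl; f_equal; ring).
  apply is_lim_seq_scal_l, is_lim_seq_geom.
  assert (Hi : / d < / 1) by (apply Rinv_1_lt_contravar; lra). rewrite Rinv_1 in Hi.
  rewrite Rabs_pos_eq; [exact Hi|]. left; apply Rinv_0_lt_compat; lra.
Qed.

(* Indeed (a_n + c)/d^n decreases and (a_n - c)/d^n
   increases, where c = M/(d-1). *)
Lemma telescoping_limit (a : nat -> R) (d M : R) (N : nat) : 1 < d -> 0 <= M ->
  (forall n, (N <= n)%nat -> Rabs (a (S n) - d * a n) <= M) ->
  (exists g, Un_cv (fun n => a n / d ^ n) g) /\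
  (forall n, (N <= n)%nat -> (a N - M / (d - 1)) / d ^ N <= a n / d ^ n).
Proof.
  intros Hd HM H. set (c := M / (d - 1)).
  assert (Hc : 0 <= c) by (apply Rdiv_le_0_compat; lra).
  assert (HcM : M = c * (d - 1)) by (unfold c; field; lra).
  assert (Hpow : forall n, 0 < d ^ n) by (intro; apply pow_lt; lra).
  assert (Hshift : forall n x, x / d ^ S n = x / d / d ^ n)
    by (intros n x; pose proof (Hpow n); simpl; field; split; lra).
  assert (Hdiv : forall x y n, x <= y -> x / d ^ n <= y / d ^ n)
    by (intros x y n Hxy; apply Rmult_le_compat_r; [left; apply Rinv_0_lt_compat, Hpow|exact Hxy]).
  assert (Hupper : forall n, (N <= n)%nat -> (a (S n) + c) / d ^ S n <= (a n + c) / d ^ n).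
  { intros n Hn. pose proof (proj1 (Rabs_le_between _ _) (H n Hn)).
    rewrite Hshift. apply Hdiv. apply (Rmult_le_reg_r d); [lra|].
    unfold Rdiv. rewrite Rmult_assoc, Rinv_l; lra. }
  assert (Hlower : forall n, (N <= n)%nat -> (a n - c) / d ^ n <= (a (S n) - c) / d ^ S n).
  { intros n Hn. pose proof (proj1 (Rabs_le_between _ _) (H n Hn)).
    rewrite Hshift. apply Hdiv. apply (Rmult_le_reg_r d); [lra|].
    unfold Rdiv. rewrite Rmult_assoc, Rinv_l; lra. }
  assert (Hlow_from_N : forall k, (a N - c) / d ^ N <= (a (k + N)%nat - c) / d ^ (k + N)).
  { induction k as [|k IH]; [simpl; lra|]. eapply Rle_trans; [exact IH|].
    apply (Hlower (k + N)%nat). lia. }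
  split.
  - destruct (ex_finite_lim_seq_decr (fun k => (a (k + N)%nat + c) / d ^ (k + N))
                ((a N - c) / d ^ N)) as [l Hl].
    { intro k. apply (Hupper (k + N)%nat). lia. }
    { intro k. eapply Rle_trans; [apply Hlow_from_N|]. apply Hdiv. lra. }
    exists l. apply is_lim_seq_Reals, (is_lim_seq_incr_n _ N).
    pose proof (geometric_vanishing c d Hd) as H0. apply (is_lim_seq_incr_n _ N) in H0.
    replace l with (l - 0) by ring.
    apply is_lim_seq_ext with (fun k => (a (k + N)%nat + c) / d ^ (k + N) - c / d ^ (k + N)).
    { intro k. field. apply Rgt_not_eq, Hpow. }
    apply is_lim_seq_minus'; auto.
  - intros n Hn. replace n with (n - N + N)%nat by lia.
    eapply Rle_trans; [apply (Hlow_from_N (n - N)%nat)|]. apply Hdiv. lra.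
Qed.

Lemma Un_cv_eventually_eq (u v : nat -> R) (l : R) (N : nat) :
  (forall n, (N <= n)%nat -> u n = v n) -> Un_cv u l -> Un_cv v l.
Proof.
  intros H Hu. apply is_lim_seq_Reals. apply is_lim_seq_Reals in Hu.
  apply (is_lim_seq_ext_loc u v); [exists N; exact H|exact Hu].
Qed.

Lemma squeeze_geometric (u v : nat -> R) (ap g C d : R) (N : nat) : 1 < d -> Un_cv u g ->
  (forall n, (N <= n)%nat -> ap * u n <= v n <= ap * u n + C / d ^ n) ->
  Un_cv v (ap * g).
Proof.
  intros Hd Hu H. apply is_lim_seq_Reals. apply is_lim_seq_Reals in Hu.
  apply (is_lim_seq_le_le_loc (fun n => ap * u n) v (fun n => ap * u n + C / d ^ n)).
  - exists N. exact H.
  - apply (is_lim_seq_scal_l u ap g Hu).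
  - replace (ap * g) with (ap * g + 0) by ring. apply is_lim_seq_plus'.
    + apply (is_lim_seq_scal_l u ap g Hu).
    + apply geometric_vanishing; auto.
Qed.

Lemma linear_escape (b v : nat -> R) (d kappa : R) (N : nat) : 1 < d -> 0 < kappa ->
  (forall n, (N <= n)%nat -> d * b n + kappa * d ^ n <= b (S n)) ->
  (forall n, (N <= n)%nat -> b n / d ^ n <= v n) -> cv_infty v.
Proof.
  intros Hd Hk Hstep Hv. set (e := kappa / d).
  assert (He : 0 < e) by (apply Rdiv_lt_0_compat; lra).
  assert (Hinc : forall n, (N <= n)%nat -> b n / d ^ n + e <= b (S n) / d ^ S n).
  { intros n Hn. specialize (Hstep n Hn). assert (Hdn : 0 < d ^ n) by (apply pow_lt; lra).
    replace (b n / d ^ n + e) with ((d * b n + kappa * d ^ n) / d ^ S n)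
      by (unfold e; simpl; field; split; lra).
    apply Rmult_le_compat_r; [left; apply Rinv_0_lt_compat, pow_lt; lra|exact Hstep]. }
  assert (Hlin : forall k, b N / d ^ N + INR k * e <= b (k + N)%nat / d ^ (k + N)).
  { induction k as [|k IH]; [simpl; lra|]. rewrite S_INR.
    pose proof (Hinc (k + N)%nat ltac:(lia)). simpl plus. lra. }
  intro M. destruct (INR_unbounded ((M - b N / d ^ N) / e)) as [k0 Hk0].
  exists (k0 + N)%nat. intros n Hn.
  assert (Hk0e : M - b N / d ^ N < INR k0 * e).
  { apply (Rmult_lt_reg_r (/ e)); [apply Rinv_0_lt_compat; lra|].
    rewrite Rmult_assoc, Rinv_r by lra. unfold Rdiv in Hk0. lra. }
  assert (INR k0 <= INR (n - N)) by (apply le_INR; lia).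
  specialize (Hlin (n - N)%nat). replace (n - N + N)%nat with n in Hlin by lia.
  specialize (Hv n ltac:(lia)). nra.
Qed.

Lemma logp_mono (y y' : R) : y <= y' -> logp y <= logp y'.
Proof.
  intro H. unfold logp.
  destruct (Rlt_dec 1 y'), (Rlt_dec 1 y); try lra.
  - apply ln_monotone; lra.
  - rewrite <- ln_1. apply ln_monotone; lra.
Qed.

Lemma logp_ge_ln (y : R) : 0 < y -> ln y <= logp y.
Proof.
  intro H. unfold logp. destruct (Rlt_dec 1 y); [lra|].
  rewrite <- ln_1. apply ln_monotone; lra.
Qed.

Lemma logp_eq_ln (y : R) : 1 <= y -> logp y = ln y.
Proof.
  intro H. unfold logp. destruct (Rlt_dec 1 y); [reflexivity|].
  replace y with 1 by lra. symmetry. apply ln_1.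
Qed.

Lemma fiter_split (p : cpoly) (q : bpoly) (n : nat) (z w : Cx) :
  fiter p q n (z, w) = (piter p n z, Qiter p q n z w).
Proof.
  unfold Qiter. replace (piter p n z) with (fst (fiter p q n (z, w))).
  - destruct (fiter p q n (z, w)); reflexivity.
  - induction n as [|n IH]; [reflexivity|]. unfold fiter, piter in *. simpl. congruence.
Qed.

Lemma Qiter_S (p : cpoly) (q : bpoly) (n : nat) (z w : Cx) :
  Qiter p q (S n) z w = beval q (piter p n z) (Qiter p q n z w).
Proof.
  unfold Qiter at 1. change (fiter p q (S n) (z, w)) with (fmap p q (fiter p q n (z, w))).
  rewrite fiter_split. reflexivity.
Qed.

Lemma fiter_invariant (p : cpoly) (q : bpoly) (W : Cx * Cx -> Prop) (x : Cx * Cx) (n0 : nat) :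
  (forall y, W y -> W (fmap p q y)) -> W (fiter p q n0 x) ->
  forall n, (n0 <= n)%nat -> W (fiter p q n x).
Proof.
  intros Hinv H0 n Hn. replace n with (n - n0 + n0)%nat by lia.
  induction (n - n0)%nat as [|k IH]; [exact H0|].
  change (fiter p q (S k + n0) x) with (fmap p q (fiter p q (k + n0) x)). auto.
Qed.

Lemma Gp_limit_and_rate (p : cpoly) (d : nat) (z : Cx) :
  (2 <= d)%nat -> monic_deg p d -> in_Ap p z ->
  exists g eps N, Un_cv (Gp_seq p d z) g /\ 0 < eps /\
    forall n, (N <= n)%nat -> 1 + eps * INR d ^ n <= ln (Cmod (piter p n z)).
Proof.
  intros Hd Hp Hz.
  destruct (p_log_estimate p d Hp ltac:(lia)) as [K [M [HK [HM Hlog]]]].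
  set (dR := INR d).
  assert (HdR : 1 < dR) by (unfold dR; apply (lt_INR 1); lia).
  set (c := M / (dR - 1)).
  set (a := fun n => ln (Cmod (piter p n z))).
  destruct (Hz (Rmax K (exp (c + 2)))) as [N HN].
  assert (Hbig : forall n, (N <= n)%nat -> K <= Cmod (piter p n z) /\ c + 2 <= a n).
  { intros n Hn. specialize (HN n Hn).
    split; [left; eapply Rle_lt_trans; [apply Rmax_l|exact HN]|].
    unfold a. rewrite <- (ln_exp (c + 2)).
    apply ln_monotone; [apply exp_pos|]. left; eapply Rle_lt_trans; [apply Rmax_r|exact HN]. }
  destruct (telescoping_limit a dR M N HdR HM) as [[g Hcv] Hlow].
  { intros n Hn. apply Hlog, Hbig, Hn. }
  exists g, (1 / dR ^ N), N.
  assert (HdN : 0 < dR ^ N) by (apply pow_lt; lra).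
  split; [|split].
  - apply (Un_cv_eventually_eq (fun n => a n / dR ^ n) _ g N); [|exact Hcv].
    intros n Hn. unfold Gp_seq, a. fold dR. rewrite logp_eq_ln; [reflexivity|].
    destruct (Hbig n Hn) as [HKn _]. lra.
  - apply Rdiv_lt_0_compat; lra.
  - intros n Hn. specialize (Hlow n Hn). fold c in Hlow. destruct (Hbig N (le_n N)) as [_ HaN].
    assert (Hdn : 0 < dR ^ n) by (apply pow_lt; lra).
    assert (Hratio : 1 <= dR ^ n / dR ^ N).
    { apply (Rmult_le_reg_r (dR ^ N)); [lra|].
      replace (dR ^ n / dR ^ N * dR ^ N) with (dR ^ n) by (field; lra).
      rewrite Rmult_1_l. apply Rle_pow; [lra|exact Hn]. }
    (* a_n / d^n >= (a_N - c) / d^N >= 2 / d^N *)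
    assert (H2 : 2 / dR ^ N <= a n / dR ^ n).
    { eapply Rle_trans; [|exact Hlow].
      apply Rmult_le_compat_r; [left; apply Rinv_0_lt_compat|]; lra. }
    assert (Han : 2 * (dR ^ n / dR ^ N) <= a n).
    { apply (Rmult_le_compat_r (dR ^ n)) in H2; [|lra].
      replace (a n / dR ^ n * dR ^ n) with (a n) in H2 by (field; lra).
      replace (2 / dR ^ N * dR ^ n) with (2 * (dR ^ n / dR ^ N)) in H2 by (field; lra).
      exact H2. }
    replace (1 / dR ^ N * dR ^ n) with (dR ^ n / dR ^ N) by (field; lra).
    fold (a n). lra.
Qed.

Lemma escaping_orbit (d gamma : nat) (p : cpoly) (q : bpoly) (R0 : R) (z w : Cx)
  (eps : R) (N : nat) :
  (2 <= d)%nat -> (1 <= gamma)%nat -> 1 < R0 ->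
  (forall x, in_WR q d gamma R0 x -> in_WR q d gamma R0 (fmap p q x)) ->
  (forall z w, in_WR q d gamma R0 (z, w) ->
     (1/2) * Cmod z ^ gamma * Cmod w ^ d <= Cmod (beval q z w)) ->
  0 < eps -> (forall n, (N <= n)%nat -> 1 + eps * INR d ^ n <= ln (Cmod (piter p n z))) ->
  in_Af p q d gamma R0 (z, w) -> cv_infty (Gf_seq p q d gamma z w).
Proof.
  intros Hd Hg HR0 Hinv Hqlb Heps Hrate [n1 Hn1].
  assert (HW : forall n, (n1 <= n)%nat ->
            in_WR q d gamma R0 (piter p n z, Qiter p q n z w)).
  { intros n Hn. rewrite <- fiter_split. apply (fiter_invariant p q _ _ n1); auto. }
  assert (HdR : 1 < INR d) by (apply (lt_INR 1); lia).
  assert (Hmod : forall n, (n1 <= n)%nat ->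
            1 < Cmod (piter p n z) /\ 0 < Cmod (Qiter p q n z w)).
  { intros n Hn. destruct (in_WR_moduli q d gamma R0 _ _ ltac:(lra) (HW n Hn)). lra. }
  apply (linear_escape (fun n => ln (Cmod (Qiter p q n z w))) _ (INR d) eps (n1 + N)); auto.
  - intros n Hn. destruct (Hmod n ltac:(lia)) as [Hx Hy].
    set (x := Cmod (piter p n z)) in *. set (y := Cmod (Qiter p q n z w)) in *.
    pose proof (Hqlb _ _ (HW n ltac:(lia))) as Hq. rewrite <- Qiter_S in Hq. fold x y in Hq.
    assert (Hxg : 0 < x ^ gamma) by (apply pow_lt; lra).
    assert (Hyd : 0 < y ^ d) by (apply pow_lt; lra).
    assert (Hln : ln (/ 2 * x ^ gamma * y ^ d) <= ln (Cmod (Qiter p q (S n) z w)))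
      by (apply ln_monotone; [repeat apply Rmult_lt_0_compat|]; lra).
    assert (Hhalf : 0 < / 2 * x ^ gamma) by (apply Rmult_lt_0_compat; lra).
    rewrite ln_mult, ln_mult, ln_Rinv, !ln_pow in Hln by lra.
    assert (HgR : 1 <= INR gamma) by (apply (le_INR 1); lia).
    pose proof (Hrate n ltac:(lia)) as Hrn. fold x in Hrn.
    assert (0 < eps * INR d ^ n) by (apply Rmult_lt_0_compat; [|apply pow_lt]; lra).
    assert (ln x <= INR gamma * ln x) by nra.
    pose proof ln_2_lt_1. lra.
  - intros n Hn. destruct (Hmod n ltac:(lia)) as [_ Hy]. unfold Gf_seq.
    apply Rmult_le_compat_r; [left; apply Rinv_0_lt_compat, pow_lt; lra|].
    eapply Rle_trans; [apply logp_ge_ln, Hy|]. apply logp_mono, Rmax_r.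
Qed.

Lemma log_max_outside_W (q : bpoly) (d gamma : nat) (R0 : R) (z w : Cx) :
  1 < R0 -> R0 < Cmod z -> ~ in_WR q d gamma R0 (z, w) ->
  alpha_plus q d gamma * ln (Cmod z)
  <= logp (Rmax (rpow (Cmod z) (alpha_plus q d gamma)) (Cmod w))
  <= ln R0 + alpha_plus q d gamma * ln (Cmod z).
Proof.
  intros HR Hz HnW. unfold in_WR in HnW. simpl in HnW. unfold alpha_plus.
  set (x := Cmod z) in *.
  assert (HlR : 0 < ln R0) by (rewrite <- ln_1; apply ln_increasing; lra).
  destruct (alpha q d gamma) as [a|].
  - set (ap := Rmax a 0).
    assert (Hw : Cmod w <= R0 * Rpower x a) by (apply Rnot_lt_le; intro; apply HnW; auto).
    assert (Hrp : rpow x ap = Rpower x ap)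
      by (unfold rpow; destruct (Rlt_dec 0 x); [reflexivity|lra]).
    rewrite Hrp.
    assert (H1 : 1 <= Rpower x ap)
      by (rewrite <- (Rpower_O x) by lra; apply Rle_Rpower; [lra|apply Rmax_r]).
    assert (H2 : Rpower x a <= Rpower x ap) by (apply Rle_Rpower; [lra|apply Rmax_l]).
    set (m := Rmax (Rpower x ap) (Cmod w)).
    assert (Hm1 : Rpower x ap <= m) by apply Rmax_l.
    assert (Hm2 : m <= R0 * Rpower x ap) by (apply Rmax_lub; nra).
    rewrite logp_eq_ln by lra.
    assert (Hln : ln (Rpower x ap) = ap * ln x) by (unfold Rpower; apply ln_exp).
    split.
    + rewrite <- Hln. apply ln_monotone; [lra|exact Hm1].
    + rewrite <- Hln, <- ln_mult by lra. apply ln_monotone; lra.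
  - assert (Hw : w = C0) by (apply NNPP; intro; apply HnW; auto).
    rewrite Hw, Cmod_C0.
    replace (rpow x 0) with 1
      by (unfold rpow; destruct (Rlt_dec 0 x); [symmetry; apply Rpower_O|]; lra).
    rewrite Rmax_left, logp_eq_ln, ln_1 by lra. lra.
Qed.

Lemma bounded_orbit (d gamma : nat) (p : cpoly) (q : bpoly) (R0 : R) (z w : Cx) (g : R) :
  (2 <= d)%nat -> 1 < R0 -> in_Ap p z -> Un_cv (Gp_seq p d z) g ->
  ~ in_Af p q d gamma R0 (z, w) ->
  Un_cv (Gf_seq p q d gamma z w) (alpha_plus q d gamma * g).
Proof.
  intros Hd HR0 Hz Hcv Hout.
  assert (HdR : 1 < INR d) by (apply (lt_INR 1); lia).
  destruct (Hz R0) as [N HN].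
  apply (squeeze_geometric (Gp_seq p d z) _ _ g (ln R0) (INR d) N HdR Hcv).
  intros n Hn. specialize (HN n Hn).
  assert (HnW : ~ in_WR q d gamma R0 (piter p n z, Qiter p q n z w))
    by (intro H; apply Hout; exists n; rewrite fiter_split; exact H).
  destruct (log_max_outside_W q d gamma R0 (piter p n z) (Qiter p q n z w) HR0 HN HnW)
    as [Hlo Hhi].
  assert (Hdn : 0 < INR d ^ n) by (apply pow_lt; lra).
  unfold Gf_seq, Gp_seq. rewrite logp_eq_ln by lra.
  set (ap := alpha_plus q d gamma) in *. set (L := ln (Cmod (piter p n z))) in *.
  replace (ap * (L / INR d ^ n)) with (ap * L / INR d ^ n) by (field; lra).
  replace (ap * L / INR d ^ n + ln R0 / INR d ^ n) with ((ln R0 + ap * L) / INR d ^ n)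
    by (field; lra).
  split; apply Rmult_le_compat_r; try lra; left; apply Rinv_0_lt_compat; lra.
Qed.

Theorem corollary6p9 (d gamma : nat) (p : cpoly) (q : bpoly) :
  (2 <= d)%nat ->
  (1 <= gamma)%nat ->
  monic_deg p d ->                                 (* delta = d, p monic *)
  length q = S d ->                                (* deg_w q = d *)
  monic_deg (nth d q nil) gamma ->                 (* leading coeff b monic of degree gamma *)
  exists Rmin : R, forall R0 : R,
    Rmin <= R0 -> 1 < R0 ->
    (forall x, in_WR q d gamma R0 x -> in_WR q d gamma R0 (fmap p q x)) ->
    (forall x, in_WR q d gamma R0 x -> in_Ap p (fst x)) ->
    forall z w : Cx, in_Ap p z ->
      (in_Af p q d gamma R0 (z, w) -> cv_infty (Gf_seq p q d gamma z w)) /\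
      (~ in_Af p q d gamma R0 (z, w) ->
         exists g : R, Un_cv (Gp_seq p d z) g /\
           Un_cv (Gf_seq p q d gamma z w) (alpha_plus q d gamma * g)).
Proof.
  intros Hd Hg Hp Hq Hb.
  destruct (q_lower_bound_on_W d gamma q Hg Hq Hb) as [Rmin Hqlb].
  exists Rmin. intros R0 HRmin HR0 Hinv _ z w Hz.
  destruct (Gp_limit_and_rate p d z Hd Hp Hz) as [g [eps [N [Hcv [Heps Hrate]]]]].
  split.
  - apply (escaping_orbit d gamma p q R0 z w eps N); auto.
    intros z' w'. apply (Hqlb R0 z' w' HRmin).
  - intro Hout. exists g. split; [exact Hcv|].
    apply (bounded_orbit d gamma p q R0 z w g); auto.
Qed.
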